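(* Let $\beta$ be any real number and let $\alpha>\frac{1+\sqrt{33}}{2}$. Then there exists $N$ such that for every integer $n\geqslant N$ the polynomial $\phi_n^{(\alpha,\beta)}(\mu)$ has at least one non-real zero.
   Context: For real $a$ and integer $m\geqslant0$, $(a)_m=a(a+1)\cdots(a+m-1)$, $(a)_0=1$. For real $\alpha>-1$ and real $\beta$, $$\phi_n^{(\alpha,\beta)}(\mu)=\frac{(\alpha+1)_n}{n!}\sum_{k=0}^{[n/2]}\frac{(-n)_{2k}(n+\alpha+\beta+1)_{2k}}{(\alpha+1)_{2k}}\Big(\frac{\mu}{4}\Big)^k,$$ which equals $\sum_{k=0}^{[n/2]}\big(\tfrac{d^{2k}}{dx^{2k}}P_n^{(\alpha,\beta)}(x)\big)\big|_{x=1}\mu^k$ for the Jacobi polynomial $P_n^{(\alpha,\beta)}$; here $[a]$ denotes the integer part of $a$. *)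

From Stdlib Require Import Reals Lra Lia Arith Factorial.
Open Scope R_scope.

Fixpoint poch (a : R) (m : nat) : R :=
  match m with
  | O => 1
  | S m' => poch a m' * (a + INR m')
  end.

Definition phi_coef (alpha beta : R) (n k : nat) : R :=
  poch (alpha + 1) n / INR (fact n) *
  (poch (- INR n) (2 * k) * poch (INR n + alpha + beta + 1) (2 * k)
   / poch (alpha + 1) (2 * k)) * (/ 4) ^ k.

Definition phi (alpha beta : R) (n : nat) (mu : R) : R :=
  sum_f_R0 (fun k => phi_coef alpha beta n k * mu ^ k) (Nat.div2 n).

Definition Cplx := (R * R)%type.
Definition Cadd (z w : Cplx) : Cplx := (fst z + fst w, snd z + snd w).
Definition Cmul (z w : Cplx) : Cplx :=
  (fst z * fst w - snd z * snd w, fst z * snd w + snd z * fst w).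
Definition Cscale (c : R) (z : Cplx) : Cplx := (c * fst z, c * snd z).
Fixpoint Cpow (z : Cplx) (k : nat) : Cplx :=
  match k with
  | O => (1, 0)
  | S k' => Cmul (Cpow z k') z
  end.
Fixpoint Csum (f : nat -> Cplx) (n : nat) : Cplx :=
  match n with
  | O => f O
  | S n' => Cadd (Csum f n') (f n)
  end.

Definition phiC (alpha beta : R) (n : nat) (z : Cplx) : Cplx :=
  Csum (fun k => Cscale (phi_coef alpha beta n k) (Cpow z k)) (Nat.div2 n).

Definition has_nonreal_zero (alpha beta : R) (n : nat) : Prop :=
  exists z : Cplx, snd z <> 0 /\ phiC alpha beta n z = (0, 0).

(* If all zeros of a real polynomial c * prod (X - r_i) are real, its three lowest
   coefficients satisfy a_1^2 - 2 a_0 a_2 = c^2 * sum_i prod_(j <> i) r_j^2 >= 0.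
   For phi_n the coefficients are explicit products of Pochhammer symbols, and
   2 a_0 a_2 - a_1^2 has the sign of a quartic polynomial in n with leading coefficient
   2 (alpha+1)(alpha+2) - (alpha+3)(alpha+4) = alpha^2 - alpha - 8, which for alpha > -1
   is positive exactly when alpha > (1 + sqrt 33)/2. So for large n the inequality fails and
   phi_n must have a non-real zero. *)

From Pilot Require Import Defs.
From Stdlib Require Import Reals Lra Lia Factorial Classical.
From Coquelicot Require Import Coquelicot.
Open Scope R_scope.

Lemma is_lim_seq_shift_ratio (c : R) :
  is_lim_seq (fun n => (INR n + c) / INR n) 1.
Proof.
  apply is_lim_seq_ext_loc with (fun n => 1 + c * / INR n).
  - exists 1%nat; intros n Hn. field. apply not_0_INR. lia.
  - replace (Finite 1) with (Finite (1 + c * 0)) by (f_equal; ring).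
    apply is_lim_seq_plus'; [apply is_lim_seq_const|].
    apply is_lim_seq_mult'; [apply is_lim_seq_const|].
    exact (is_lim_seq_inv INR p_infty is_lim_seq_INR ltac:(discriminate)).
Qed.

Lemma is_lim_seq_eventually_pos (u : nat -> R) (l : R) :
  is_lim_seq u l -> 0 < l -> eventually (fun n => 0 < u n).
Proof.
  intros Hu Hl. apply is_lim_seq_spec in Hu.
  apply (filter_imp (fun n => Rabs (u n - l) < mkposreal l Hl)); [|exact (Hu _)].
  intros n Hn. apply Rabs_lt_between in Hn. simpl in Hn. lra.
Qed.

Lemma eventually_INR_gt (M : R) : eventually (fun n => M < INR n).
Proof. exact (proj2 (is_lim_seq_spec INR p_infty) is_lim_seq_INR M). Qed.

Definition phi_gap (alpha beta x : R) : R :=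
  let g := alpha + beta + 1 in
  2 * (alpha + 1) * (alpha + 2) * ((x - 2) * (x - 3) * (x + g + 2) * (x + g + 3))
  - (alpha + 3) * (alpha + 4) * (x * (x - 1) * (x + g) * (x + g + 1)).

Lemma phi_gap_eventually_pos (alpha beta : R) :
  (alpha + 3) * (alpha + 4) < 2 * (alpha + 1) * (alpha + 2) ->
  eventually (fun n => 0 < phi_gap alpha beta (INR n)).
Proof.
  intros Hlead.
  set (g := alpha + beta + 1).
  set (r c n := (INR n + c) / INR n).
  set (q n := 2 * (alpha + 1) * (alpha + 2) * (r (-2) n * r (-3) n * r (g + 2) n * r (g + 3) n)
              - (alpha + 3) * (alpha + 4) * (r 0 n * r (-1) n * r g n * r (g + 1) n)).
  assert (Hr4 : forall a b c d, is_lim_seq (fun n => r a n * r b n * r c n * r d n) 1).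
  { intros a b c d. replace (Finite 1) with (Finite (1 * 1 * 1 * 1)) by (f_equal; ring).
    apply is_lim_seq_mult'; [apply is_lim_seq_mult'; [apply is_lim_seq_mult'|]|];
      apply is_lim_seq_shift_ratio. }
  assert (Hq : is_lim_seq q (2 * (alpha + 1) * (alpha + 2) * 1 - (alpha + 3) * (alpha + 4) * 1)).
  { apply is_lim_seq_minus'; apply is_lim_seq_mult'; (apply is_lim_seq_const || apply Hr4). }
  apply (filter_imp (fun n => 0 < INR n /\ 0 < q n)).
  - intros n [Hx Hqn].
    replace (phi_gap alpha beta (INR n)) with (INR n ^ 4 * q n)
      by (unfold phi_gap, q, r; fold g; field; lra).
    apply Rmult_lt_0_compat; [apply pow_lt|]; lra.
  - apply filter_and; [apply eventually_INR_gt|].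
    apply (is_lim_seq_eventually_pos _ _ Hq); lra.
Qed.

Lemma poch_pos (a : R) (m : nat) : 0 < a -> 0 < poch a m.
Proof.
  intros Ha; induction m as [|m IH]; simpl; [lra|].
  apply Rmult_lt_0_compat; [exact IH|]. pose proof (pos_INR m); lra.
Qed.

Lemma phi_coef0_pos (alpha beta : R) (n : nat) :
  0 < alpha + 1 -> 0 < phi_coef alpha beta n 0.
Proof.
  intros Ha; unfold phi_coef; simpl.
  assert (0 < poch (alpha + 1) n / INR (fact n)).
  { apply Rdiv_lt_0_compat; [apply poch_pos; lra | apply lt_0_INR, lt_O_fact]. }
  replace (1 * 1 / 1 * 1) with 1 by field.
  lra.
Qed.

Lemma phi_coef_gap_eq (alpha beta : R) (n : nat) :
  0 < alpha + 1 ->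
  let x := INR n in let g := alpha + beta + 1 in
  2 * phi_coef alpha beta n 0 * phi_coef alpha beta n 2 - phi_coef alpha beta n 1 ^ 2 =
  phi_coef alpha beta n 0 ^ 2 * (x * (x - 1) * (x + g) * (x + g + 1)) * phi_gap alpha beta x
  / (16 * ((alpha + 1) * (alpha + 2)) ^ 2 * ((alpha + 3) * (alpha + 4))).
Proof.
  intros Ha x g; subst x g. pose proof (INR_fact_neq_0 n).
  unfold phi_gap, phi_coef; simpl.
  field; repeat split; lra.
Qed.

Lemma phi_coef_sqr_lt (alpha beta : R) (n : nat) :
  0 < alpha + 1 -> (4 <= n)%nat -> 0 < INR n + alpha + beta + 1 ->
  0 < phi_gap alpha beta (INR n) ->
  phi_coef alpha beta n 1 ^ 2 < 2 * phi_coef alpha beta n 0 * phi_coef alpha beta n 2.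
Proof.
  intros Ha Hn Hg Hgap.
  assert (Hx : 4 <= INR n) by (replace 4 with (INR 4) by (simpl; ring); apply le_INR; exact Hn).
  apply Rlt_0_minus. rewrite (phi_coef_gap_eq alpha beta n Ha).
  pose proof (phi_coef0_pos alpha beta n Ha) as Hc0.
  apply Rdiv_lt_0_compat.
  - apply Rmult_lt_0_compat; [apply Rmult_lt_0_compat|exact Hgap].
    + apply pow_lt; exact Hc0.
    + repeat apply Rmult_lt_0_compat; lra.
  - repeat apply Rmult_lt_0_compat; try apply pow_lt; lra.
Qed.

Lemma div2_ge2 (n : nat) : (4 <= n)%nat -> (2 <= Nat.div2 n)%nat.
Proof. intros Hn. pose proof (Nat.div2_odd n). destruct (Nat.odd n); simpl in *; lia. Qed.

From mathcomp Require Import all_boot all_order all_algebra.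
From mathcomp Require Import Rstruct complex ring.
Import GRing.Theory Num.Theory.
(* Re-imported because Coquelicot's [Cpow] shadows the one from [Defs]. *)
Import Pilot.Defs.

Section LowCoefNewton.
Local Open Scope complex_scope.
Local Open Scope ring_scope.

Definition low_coef_newton {F : numDomainType} (p : {poly F}) : bool :=
  2 * p`_0 * p`_2 <= p`_1 ^+ 2.

Lemma low_coef_newton_prod_XsubC (F : realDomainType) (s : seq F) :
  low_coef_newton (\prod_(r <- s) ('X - r%:P)).
Proof.
rewrite /low_coef_newton; elim: s => [|r s]; first by rewrite big_nil !coefE /= mulr0 sqr_ge0.
rewrite big_cons mulrBl !coefB !coefXM !coefCM /=.
set Q := \prod_(_ <- _) _; rewrite -subr_ge0 => IH; rewrite -subr_ge0.
have -> : (Q`_0 - r * Q`_1) ^+ 2 - 2 * (0 - r * Q`_0) * (Q`_1 - r * Q`_2)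
          = Q`_0 ^+ 2 + r ^+ 2 * (Q`_1 ^+ 2 - 2 * Q`_0 * Q`_2) by ring.
by apply: addr_ge0; [exact: sqr_ge0 | exact: mulr_ge0 (sqr_ge0 r) IH].
Qed.

Lemma low_coef_newtonZ (F : realDomainType) (c : F) (p : {poly F}) :
  low_coef_newton p -> low_coef_newton (c *: p).
Proof.
rewrite /low_coef_newton !coefZ -subr_ge0 => hp; rewrite -subr_ge0.
have -> : (c * p`_1) ^+ 2 - 2 * (c * p`_0) * (c * p`_2)
          = c ^+ 2 * (p`_1 ^+ 2 - 2 * p`_0 * p`_2) by ring.
by rewrite mulr_ge0 ?sqr_ge0.
Qed.

Lemma low_coef_newton_real_rooted {R : rcfType} {p : {poly R}} :
  (forall z : R[i], root (map_poly (real_complex R) p) z -> complex.Im z = 0) ->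
  low_coef_newton p.
Proof.
move=> real_roots; have [->|p0] := eqVneq p 0.
  by rewrite /low_coef_newton !coef0 mulr0 sqr_ge0.
set pC := map_poly (real_complex R) p.
have [r def_pC] := closed_field_poly_normal pC.
have pC0 : lead_coef pC != 0 by rewrite lead_coef_eq0 map_poly_eq0.
have r_real z : z \in r -> z = (complex.Re z)%:C.
  move=> zr; have : root pC z by rewrite def_pC rootZ // root_prod_XsubC.
  by move/real_roots; case: z {zr} => x y /= ->.
set Q := \prod_(z <- r) ('X - (complex.Re z)%:P).
have defQ : map_poly (real_complex R) Q = \prod_(z <- r) ('X - z%:P).
  rewrite rmorph_prod /=; apply: eq_big_seq => z zr.
  by rewrite map_polyXsubC /= -r_real.
have -> : p = lead_coef p *: Q.
  apply: (@map_inj_poly _ _ (real_complex R) (@complexI R)) => //.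
  by rewrite linearZ /= defQ -lead_coef_map -/pC -def_pC.
apply: low_coef_newtonZ.
by have := @low_coef_newton_prod_XsubC _ [seq complex.Re z | z <- r]; rewrite big_map.
Qed.

End LowCoefNewton.

Section PhiComplex.
Local Open Scope complex_scope.
Local Open Scope ring_scope.

Definition toC (z : Cplx) : R[i] := Complex (fst z) (snd z).

Lemma toC_add (z w : Cplx) : toC (Cadd z w) = toC z + toC w.
Proof. by case: z => a b; case: w => c d. Qed.

Lemma toC_mul (z w : Cplx) : toC (Cmul z w) = toC z * toC w.
Proof. by case: z => a b; case: w => c d. Qed.

Lemma toC_scale (c : R) (z : Cplx) : toC (Cscale c z) = c%:C * toC z.
Proof.
by case: z => a b; rewrite /toC /=; congr (_ +i* _); rewrite mul0r ?subr0 ?addr0.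
Qed.

Lemma toC_pow (z : Cplx) (k : nat) : toC (Cpow z k) = toC z ^+ k.
Proof. by elim: k => [|k IH] /=; last rewrite toC_mul IH exprSr. Qed.

Lemma toC_sum (f : nat -> Cplx) (n : nat) : toC (Csum f n) = \sum_(i < n.+1) toC (f i).
Proof.
elim: n => [|n IH] /=; first by rewrite big_ord1.
by rewrite toC_add IH [in RHS]big_ord_recr.
Qed.

Definition phi_poly (alpha beta : R) (n : nat) : {poly R} :=
  \poly_(k < (Nat.div2 n).+1) phi_coef alpha beta n k.

Lemma toC_phiC (alpha beta : R) (n : nat) (z : Cplx) :
  toC (phiC alpha beta n z) = (map_poly (real_complex R) (phi_poly alpha beta n)).[toC z].
Proof.
have -> : map_poly (real_complex R) (phi_poly alpha beta n)
          = \poly_(k < (Nat.div2 n).+1) (phi_coef alpha beta n k)%:C.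
  by apply/polyP => k; rewrite coef_map !coef_poly; case: ifP.
rewrite horner_poly /phiC toC_sum; apply: eq_bigr => i _.
by rewrite toC_scale toC_pow.
Qed.

Lemma phi_poly_real_rooted (alpha beta : R) (n : nat) :
  ~ has_nonreal_zero alpha beta n ->
  forall z : R[i], root (map_poly (real_complex R) (phi_poly alpha beta n)) z ->
  complex.Im z = 0.
Proof.
move=> no_zero [x y] /= /rootP root_xy.
case: (Req_dec y 0) => // y0; case: no_zero; exists (x, y); split => //.
have := toC_phiC alpha beta n (x, y); rewrite root_xy.
by case: (phiC alpha beta n (x, y)) => u v [-> ->].
Qed.

End PhiComplex.

Lemma has_nonreal_zero_of_phi_coef (alpha beta : R) (n : nat) :
  (4 <= n)%coq_nat ->
  phi_coef alpha beta n 1 ^ 2 < 2 * phi_coef alpha beta n 0 * phi_coef alpha beta n 2 ->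
  has_nonreal_zero alpha beta n.
Proof.
move=> n_ge4 coef_gap; apply: NNPP => no_zero.
have := low_coef_newton_real_rooted (phi_poly_real_rooted alpha beta n no_zero).
have /leP n2_ge2 : (2 <= Nat.div2 n)%coq_nat by apply: div2_ge2.
rewrite /low_coef_newton /phi_poly !coef_poly !ltnS leq0n (ltnW n2_ge2) n2_ge2.
have two : (2%:R)%R = 2 :> R by rewrite (IZRposE 2) INRE.
move/RleP; rewrite two -!RmultE -RpowE; lra.
Qed.

Theorem mainTheorem14 (alpha beta : R) :
  alpha > (1 + sqrt 33) / 2 ->
  exists N : nat, forall n : nat, (N <= n)%coq_nat -> has_nonreal_zero alpha beta n.
Proof.
  intros Halpha.
  assert (Hsqrt : sqrt 33 * sqrt 33 = 33) by (apply sqrt_sqrt; lra).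
  pose proof (sqrt_pos 33).
  assert (Ha1 : 0 < alpha + 1) by lra.
  assert (Hlead : (alpha + 3) * (alpha + 4) < 2 * (alpha + 1) * (alpha + 2)) by nra.
  assert (Hev : eventually (fun n => (4 <= n)%coq_nat /\ 0 < INR n + alpha + beta + 1
                                     /\ 0 < phi_gap alpha beta (INR n))).
  { apply filter_and; [exists 4%nat; trivial|].
    apply filter_and; [|exact (phi_gap_eventually_pos alpha beta Hlead)].
    apply (filter_imp (fun n => - (alpha + beta + 1) < INR n)); [intros; lra|].
    apply eventually_INR_gt. }
  destruct Hev as [N HN]; exists N; intros n Hn.
  destruct (HN n Hn) as (Hn4 & Hg & Hgap).
  apply has_nonreal_zero_of_phi_coef; [exact Hn4|].
  exact (phi_coef_sqr_lt alpha beta n Ha1 Hn4 Hg Hgap).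
Qed.
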